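(* Let $C$ be a finite set of coupons with $\delta=|C|$, and let $(p_o)_{o\in C}$ be a probability distribution on $C$. Draw $m\ge 3$ coupons independently, each draw yielding coupon $o$ with probability $p_o$, and let $V$ be the set of distinct coupons obtained. Then \[E(|V|) \leq \min\left\{\frac{m}{\log_2(m)}\cdot H_C+3,\ m,\ \delta\right\},\] where $H_C=\sum_{o\in C} p_o \log_2 \frac{1}{p_o}$ is the entropy of the coupon distribution.
   Context: $E(|V|)$ denotes the expected cardinality of the random set $V$. In the entropy sum, terms with $p_o=0$ are taken to be $0$. *)

From HB Require Import structures.
From mathcomp Require Import all_boot all_order all_algebra.
From mathcomp Require Import reals exp.
Set Implicit Arguments. Unset Strict Implicit. Unset Printing Implicit Defensive.
Import Order.TTheory GRing.Theory Num.Theory.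
Local Open Scope ring_scope.

Definition log2 (R : realType) (x : R) : R := ln x / ln 2.

Definition expected_distinct (R : realType) (C : finType) (p : C -> R) (m : nat) : R :=
  \sum_(s : m.-tuple C) (\prod_(i < m) p (tnth s i)) * #|[set x in s]|%:R.

Definition entropy (R : realType) (C : finType) (p : C -> R) : R :=
  \sum_(o : C) (if p o == 0 then 0 else p o * log2 (p o)^-1).

From HB Require Import structures.
From mathcomp Require Import all_boot all_order all_algebra.
From mathcomp Require Import reals exp.
From mathcomp Require Import ring lra.
Set Implicit Arguments. Unset Strict Implicit. Unset Printing Implicit Defensive.
Import Order.TTheory GRing.Theory Num.Theory.
Local Open Scope ring_scope.

(* By linearity of expectation, E|V| is the sum over coupons o of the
   probability q_o that o is drawn, and q_o <= min(1, m p_o).  A coupon with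
   p_o > 1/4 contributes at most 1, and there are at most 3 of them.  For a
   lighter coupon, min(1, m p_o) <= m p_o log(1/p_o) / log m: if m p_o <= 1
   then log(1/p_o) >= log m, and otherwise
   log m = log(m p_o) + log(1/p_o) <= m p_o - 1 + log(1/p_o) <= m p_o log(1/p_o)
   since log(1/p_o) >= log 4 >= 1.  Summing gives (m / log m) H_C + 3. *)

Lemma sum_tuple_prod (R : comPzSemiRingType) (C : finType) (m : nat)
    (q : 'I_m -> C -> R) :
  \sum_(s : m.-tuple C) \prod_(i < m) q i (tnth s i) = \prod_(i < m) \sum_c q i c.
Proof.
rewrite bigA_distr_bigA /=.
rewrite (reindex (fun f : {ffun 'I_m -> C} => [tuple f i | i < m])) /=.
  by apply: eq_bigr => f _; apply: eq_bigr => i _; rewrite tnth_mktuple.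
exists (fun s : m.-tuple C => [ffun i => tnth s i]) => [f _ | s _].
  by apply/ffunP => i; rewrite ffunE tnth_mktuple.
by apply: eq_from_tnth => i; rewrite tnth_mktuple ffunE.
Qed.

Lemma ln2_ge_half (R : realType) : 1 / 2 <= ln (2 : R).
Proof.
have := @le_ln1Dx R (- (1 / 2)).
by rewrite (_ : 1 + - (1 / 2) = (2 : R)^-1) ?lnV ?posrE //; [lra | field].
Qed.

Lemma min1_mul_le_entropy_term (R : realType) (x q t : R) :
  1 < x -> 0 < q <= 1 / 4 -> t <= 1 -> t <= x * q ->
  t <= x * q * ln q^-1 / ln x.
Proof.
move=> x1 /andP[q0 q4] t1 txq.
have lnx0 : 0 < ln x by rewrite ln_gt0.
have xq0 : 0 < x * q by rewrite mulr_gt0 //; lra.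
rewrite ler_pdivlMr //.
have [xq1|xq1] := lerP (x * q) 1.
  have : ln x <= ln q^-1.
    rewrite ler_ln ?posrE ?invr_gt0 //; last by lra.
    by rewrite -div1r ler_pdivlMr.
  move=> lnx_le; apply: (le_trans (y := x * q * ln x)); first by rewrite ler_pM2r.
  by rewrite ler_pM2l.
have lnq1 : 1 <= ln q^-1.
  have : ln 4 <= ln q^-1.
    by rewrite ler_ln ?posrE ?invr_gt0 // -div1r ler_pdivlMr // mulrC -ler_pdivlMr //; lra.
  rewrite (_ : 4 = 2 * 2 :> R) ?lnM ?posrE //; last by lra.
  by have := @ln2_ge_half R; lra.
have ln_xq : ln (x * q) <= x * q - 1.
  by have := @le_ln1Dx R (x * q - 1); rewrite addrCA subrr addr0; apply; lra.
rewrite lnM ?posrE // in ln_xq; last by lra.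
rewrite lnV ?posrE // in lnq1 *.
by nra.
Qed.

Section CouponDraws.

Variables (R : realType) (C : finType) (p : C -> R) (m : nat).
Hypothesis p_ge0 : forall o, 0 <= p o.
Hypothesis p_sum1 : \sum_o p o = 1.

Definition tuple_prob (s : m.-tuple C) : R := \prod_(i < m) p (tnth s i).

Definition hit_prob (o : C) : R :=
  \sum_(s : m.-tuple C) tuple_prob s * (o \in s)%:R.

Lemma tuple_prob_ge0 s : 0 <= tuple_prob s.
Proof. exact: prodr_ge0. Qed.

Lemma sum_tuple_prob : \sum_(s : m.-tuple C) tuple_prob s = 1.
Proof.
rewrite /tuple_prob (sum_tuple_prod (fun _ c => p c)).
by rewrite (eq_bigr (fun _ => 1)) ?prodr_const ?expr1n // => i _.
Qed.

Lemma sum_tuple_prob_tnth (i : 'I_m) o :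
  \sum_(s : m.-tuple C) tuple_prob s * (tnth s i == o)%:R = p o.
Proof.
pose q j c := if j == i then p c * (c == o)%:R else p c.
transitivity (\sum_(s : m.-tuple C) \prod_(j < m) q j (tnth s j)).
  apply: eq_bigr => s _.
  rewrite /tuple_prob (bigD1 i) //= [in RHS](bigD1 i) //= /q eqxx mulrAC.
  by congr (_ * _); apply: eq_bigr => j /negbTE ->.
rewrite sum_tuple_prod (bigD1 i) //= [X in _ * X]big1 ?mulr1; last first.
  by move=> j /negbTE ji; rewrite /q ji p_sum1.
rewrite /q eqxx (bigD1 o) //= eqxx mulr1 big1 ?addr0 // => c /negbTE ->.
by rewrite mulr0.
Qed.

Lemma expected_distinct_le (k : nat) :
  (forall s : m.-tuple C, #|[set x in s]| <= k)%N -> expected_distinct p m <= k%:R.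
Proof.
move=> hk; rewrite /expected_distinct -[leRHS]mul1r.
rewrite -[X in _ <= X * _]sum_tuple_prob mulr_suml.
apply: ler_sum => s _.
by apply: ler_wpM2l; [exact: tuple_prob_ge0 | rewrite ler_nat].
Qed.

Lemma expected_distinctE : expected_distinct p m = \sum_o hit_prob o.
Proof.
rewrite /expected_distinct /hit_prob exchange_big /=; apply: eq_bigr => s _.
rewrite -mulr_sumr; congr (_ * _).
rewrite -sum1_card natr_sum big_mkcond /=.
by apply: eq_bigr => o _; rewrite inE; case: (o \in s).
Qed.

Lemma hit_prob_le1 o : hit_prob o <= 1.
Proof.
rewrite -sum_tuple_prob; apply: ler_sum => s _.
rewrite -[leRHS]mulr1; apply: ler_wpM2l; first exact: tuple_prob_ge0.
by case: (o \in s).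
Qed.

Lemma hit_prob_le_mul o : hit_prob o <= m%:R * p o.
Proof.
have -> : m%:R * p o = \sum_(i < m) \sum_s tuple_prob s * (tnth s i == o)%:R.
  by under eq_bigr do rewrite sum_tuple_prob_tnth; rewrite sumr_const card_ord mulr_natl.
rewrite exchange_big /=; apply: ler_sum => s _; rewrite -mulr_sumr.
apply: ler_wpM2l; first exact: tuple_prob_ge0.
case: (boolP (o \in s)) => [/tnthP [i ->]|_]; last by apply: sumr_ge0 => i _.
by rewrite (bigD1 i) //= eqxx lerDl; apply: sumr_ge0 => j _.
Qed.

Lemma hit_prob_le_heavy_entropy o : (1 < m)%N ->
  hit_prob o <= (if 1 / 4 < p o then 1 else 0) +
    m%:R / log2 (m%:R : R) * (if p o == 0 then 0 else p o * log2 (p o)^-1).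
Proof.
move=> m_gt1; have m1 : 1 < m%:R :> R by rewrite ltr1n.
have lnm0 : 0 < ln (m%:R : R) by rewrite ln_gt0.
have [po0|po_neq0] := eqVneq (p o) 0.
  rewrite mulr0 addr0 (le_trans (hit_prob_le_mul o)) // po0 mulr0.
  by case: ifP.
have po_gt0 : 0 < p o by rewrite lt_def po_neq0 p_ge0.
have po_le1 : p o <= 1 by rewrite -p_sum1 (bigD1 o) //= lerDl sumr_ge0.
have -> : m%:R / log2 m%:R * (p o * log2 (p o)^-1) =
          m%:R * p o * ln (p o)^-1 / ln (m%:R : R).
  by rewrite /log2; field; rewrite !gt_eqF // ln_gt0 ?ltr1n.
have [po4|po4] := ltrP (1 / 4) (p o).
  rewrite -[leLHS]addr0 lerD ?hit_prob_le1 //; apply: divr_ge0 (ltW lnm0).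
  by rewrite !mulr_ge0 ?ler0n ?(ltW po_gt0) // ln_ge0 // invf_ge1.
apply: ler_wpDl => //.
by rewrite min1_mul_le_entropy_term ?hit_prob_le1 ?hit_prob_le_mul ?po_gt0.
Qed.

End CouponDraws.

Lemma card_heavy_lt (R : realType) (C : finType) (p : C -> R) (a : R) :
  (forall o, 0 <= p o) -> \sum_o p o = 1 -> 0 < a ->
  #|[pred o | a < p o]|%:R * a < 1.
Proof.
move=> p_ge0 p_sum1 a0.
have [->|n0] := posnP #|[pred o | a < p o]|; first by rewrite mul0r.
rewrite mulr_natl -p_sum1 -sumr_const.
apply: (@lt_le_trans _ _ (\sum_(o | a < p o) p o)).
  apply: ltr_sum => [|o //]; by case/card_gt0P: n0 => o oin; apply/hasP; exists o.
by rewrite [leRHS](bigID (fun o => a < p o)) /= lerDl sumr_ge0.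
Qed.

Theorem lemma1 (R : realType) (C : finType) (p : C -> R) (m : nat) :
  (forall o, 0 <= p o) -> \sum_(o : C) p o = 1 -> (3 <= m)%N ->
  expected_distinct p m <=
    Num.min (m%:R / log2 (m%:R : R) * entropy p + 3) (Num.min (m%:R : R) (#|C|%:R)).
Proof.
move=> p_ge0 p_sum1 m3.
rewrite !le_min; apply/and3P; split; last 2 first.
- apply: expected_distinct_le => // s.
  by rewrite cardsE (leq_trans (card_size _)) ?size_tuple.
- by apply: expected_distinct_le => // s; apply: max_card.
have heavy_lt4 : (#|[pred o | (1 / 4 < p o)%R]| < 4)%N.
  have quarter_gt0 : 0 < 1 / 4 :> R by lra.
  by have := card_heavy_lt p_ge0 p_sum1 quarter_gt0; rewrite -(ltr_nat R); lra.
have hit_le (o : C) := hit_prob_le_heavy_entropy p_ge0 p_sum1 o (ltnW m3).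
rewrite expected_distinctE //; apply: le_trans (ler_sum _ (fun o _ => hit_le o)) _.
rewrite big_split /= -mulr_sumr addrC lerD2l -big_mkcond /= sumr_const.
by rewrite ler_nat -ltnS.
Qed.
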